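(* Let $l,m\in\mathbb{N}$. If $q(x)=x^6-(l+m+3)x^4+(lm+l+m+3)x^2-1$ is irreducible over $\mathbb{Q}$, then the set of all positive eigenvalues (respectively, all negative eigenvalues) of the adjacency matrix of the double subdivided star $T_{l,m}$ is linearly independent over $\mathbb{Q}$.
   Context: A subdivided star $SK_{1,l}$ is obtained by identifying exactly one pendant (end) vertex from each of $l$ copies of the path $P_3$; the identified vertex is the coalescence vertex. The double subdivided star $T_{l,m}$ is obtained from $SK_{1,l}$ and $SK_{1,m}$ by adding one edge joining their two coalescence vertices. Its characteristic polynomial is $(x^2-1)^{l+m-2}q(x)$. *)

From HB Require Import structures.
From mathcomp Require Import all_boot all_order all_algebra all_field.
Set Implicit Arguments. Unset Strict Implicit. Unset Printing Implicit Defensive.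
Import Order.TTheory GRing.Theory Num.Theory.
Local Open Scope ring_scope.

(* Vertex labelling of the double subdivided star T_{l,m} on 'I_(2 + 2l + 2m):
   0 = coalescence vertex of SK_{1,l}, 1 = coalescence vertex of SK_{1,m};
   for i < l : 2+2i is the middle vertex and 3+2i the pendant vertex of the
   i-th P_3 of SK_{1,l};
   for j < m : 2+2l+2j is the middle vertex and 3+2l+2j the pendant vertex of
   the j-th P_3 of SK_{1,m}.
   tedge lists each edge once (oriented); adjacency is its symmetrisation. *)
Definition tedge (l m u v : nat) : bool :=
  [|| (u == 0%N) && (v == 1%N),
      [&& u == 0%N, (2 <= v < 2 + 2 * l)%N & ~~ odd v],
      [&& (2 <= u < 2 + 2 * l)%N, ~~ odd u & v == u.+1],
      [&& u == 1%N, (2 + 2 * l <= v < 2 + 2 * l + 2 * m)%N & ~~ odd v]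
    | [&& (2 + 2 * l <= u < 2 + 2 * l + 2 * m)%N, ~~ odd u & v == u.+1]].

Definition adjT (l m : nat) : 'M[algC]_(2 + 2 * l + 2 * m) :=
  \matrix_(i, j) ((tedge l m i j || tedge l m j i)%:R).

Definition qT (l m : nat) : {poly rat} :=
  'X^6 - (l + m + 3)%:R *: 'X^4 + (l * m + l + m + 3)%:R *: 'X^2 - 1.

Definition Qlin_indep (S : pred algC) : Prop :=
  forall (s : seq algC) (c : algC -> rat),
    uniq s -> all S s -> \sum_(x <- s) ratr (c x) * x = 0 ->
    forall x, x \in s -> c x = 0.

From HB Require Import structures.
From mathcomp Require Import all_boot all_order all_algebra all_field.
From mathcomp Require Import ring zify.
Import Order.TTheory GRing.Theory Num.Theory.
Local Open Scope ring_scope.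
Set Implicit Arguments. Unset Strict Implicit. Unset Printing Implicit Defensive.

(* An eigenvector for an eigenvalue a with a^2 <> 1 is determined along each
   pendant path by its value at the coalescence vertex, which leaves a 2 x 2
   linear system for the two centre values whose determinant is q(a); so every
   eigenvalue is +-1 or a root of q.  Since q(x) = r(x^2) for a cubic r with
   r(0) = -1, the roots of q are +-b1, +-b2, +-b3 with (b1 b2 b3)^2 = 1, and the
   positive (negative) eigenvalues lie among 1 (-1) and one root of each pair.
   When q is irreducible, the automorphisms of the algebraic numbers act
   transitively on its roots, commute with negation and fix b1 b2 b3 = +-1;
   this yields, for each i, an automorphism fixing b_i and negating the two
   other b_j.  Adding a rational relation c0 + c1 b1 + c2 b2 + c3 b3 = 0 to its
   image leaves c0 + c_i b_i = 0, hence c_i = 0 as b_i is irrational. *)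

Local Notation pQtoC := (map_poly ratr : {poly rat} -> {poly algC}).

Lemma Qlin_indepS (S T : pred algC) : {subset S <= T} -> Qlin_indep T -> Qlin_indep S.
Proof.
move=> sST indT s c us /allP sS; apply: indT us _.
by apply/allP => x /sS/sST.
Qed.

Lemma Qlin_indepN (S : pred algC) : Qlin_indep S -> Qlin_indep [pred x | S (- x)].
Proof.
move=> indS s c us /allP sS E x xs.
have := indS (map -%R s) (fun y => c (- y)) _ _ _ (- x) (map_f _ xs).
rewrite opprK; apply.
- by rewrite map_inj_uniq //; apply: oppr_inj.
- by apply/allP => _ /mapP[y ys ->]; apply: sS.
- rewrite big_map (eq_bigr (fun y => - (ratr (c y) * y))) ?sumrN ?E ?oppr0 //.
  by move=> y _; rewrite opprK mulrN.
Qed.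

Lemma Qlin_indep_seq (t : seq algC) :
  uniq t ->
  (forall c : algC -> rat, \sum_(x <- t) ratr (c x) * x = 0 -> {in t, forall x, c x = 0}) ->
  Qlin_indep (mem t).
Proof.
move=> ut indt s c us /allP st E x xs.
pose c' y := if y \in s then c y else 0.
have perm_s : perm_eq s (filter (mem s) t).
  apply: uniq_perm; rewrite ?filter_uniq // => y.
  by rewrite mem_filter; apply/idP/andP => [ys|[]//]; split; last exact: st.
have E' : \sum_(y <- t) ratr (c' y) * y = 0.
  rewrite -[RHS]E (perm_big _ perm_s) big_filter [RHS]big_mkcond.
  apply: eq_bigr => y _; rewrite /c' -[mem s y]/(y \in s).
  by case: (y \in s); rewrite ?rmorph0 ?mul0r.
by have := indt c' E' x (st x xs); rewrite /c' xs.
Qed.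

(** * Spectrum of the double subdivided star *)

Lemma oddE (k : nat) : odd k = (k %% 2 == 1)%N.
Proof. by rewrite modn2; case: odd. Qed.

Lemma oddD2 (k i : nat) : odd (k + 2 * i) = odd k.
Proof. by rewrite oddD oddM andFb addbF. Qed.

Lemma mem_arm (o c k : nat) :
  (k \in [seq (o + 2 * i)%N | i <- iota 0 c]) = (o <= k < o + 2 * c)%N && (odd k == odd o).
Proof.
apply/mapP/idP => [[i] /[!mem_iota] ? ->|]; first by rewrite oddD2 eqxx andbT; lia.
by rewrite !oddE => ?; exists ((k - o) %/ 2)%N; rewrite ?mem_iota; lia.
Qed.

Lemma sum_nbrs (R : pzSemiRingType) (n : nat) (w : nat -> R) (e : pred nat) (N : seq nat) :
  uniq N -> {in N, forall k, (k < n)%N} -> (forall k, (k < n)%N -> e k = (k \in N)) ->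
  \sum_(k < n) w k * (e k)%:R = \sum_(k <- N) w k.
Proof.
move=> uN Nn eN.
have permN : perm_eq (filter e (iota 0 n)) N.
  apply: uniq_perm; rewrite ?filter_uniq ?iota_uniq // => k.
  rewrite mem_filter mem_iota add0n /=.
  by apply/andP/idP => [[ek kn]|kN]; [rewrite -eN | have kn := Nn k kN; rewrite eN].
rewrite -(perm_big _ permN) big_filter [RHS]big_mkcond.
rewrite -(big_mkord xpredT (fun k => w k * (e k)%:R)) /index_iota subn0.
by apply: eq_bigr => k _; case: (e k); rewrite ?mulr1 ?mulr0.
Qed.

Lemma sum_arm (R : nmodType) (F : nat -> R) (o c : nat) :
  \sum_(k <- [seq (o + 2 * i)%N | i <- iota 0 c]) F k = \sum_(i < c) F (o + 2 * i)%N.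
Proof.
by rewrite big_map -(big_mkord xpredT (fun i => F (o + 2 * i)%N)) /index_iota subn0.
Qed.

Lemma uniq_arm (o c : nat) : uniq [seq (o + 2 * i)%N | i <- iota 0 c].
Proof. by rewrite map_inj_uniq ?iota_uniq // => i j; lia. Qed.

Section DoubleStarVertices.

Variables l m : nat.
Local Notation n := (2 + 2 * l + 2 * m)%N.

Lemma double_star_vertex_ind (P : nat -> Prop) :
  P 0%N -> P 1%N ->
  (forall i, (i < l)%N -> P (2 + 2 * i)%N /\ P (3 + 2 * i)%N) ->
  (forall i, (i < m)%N -> P (2 + 2 * l + 2 * i)%N /\ P (3 + 2 * l + 2 * i)%N) ->
  forall k, (k < n)%N -> P k.
Proof.
move=> P0 P1 PA PB k kn.
have [k2|k2] := ltnP k 2; first by case: k k2 {kn} => [|[|]].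
have [kl|kl] := ltnP k (2 + 2 * l).
  pose i := ((k - 2) %/ 2)%N; have il : (i < l)%N by rewrite /i; lia.
  have : (k = 2 + 2 * i \/ k = 3 + 2 * i)%N by rewrite /i; lia.
  by case=> ->; case: (PA _ il).
pose i := ((k - 2 - 2 * l) %/ 2)%N; have im : (i < m)%N by rewrite /i; lia.
have : (k = 2 + 2 * l + 2 * i \/ k = 3 + 2 * l + 2 * i)%N by rewrite /i; lia.
by case=> ->; case: (PB _ im).
Qed.

Local Notation adj k j := (tedge l m k j || tedge l m j k).

Lemma nbrs_centre0 k : (k < n)%N ->
  adj k 0%N = (k \in 1%N :: [seq (2 + 2 * i)%N | i <- iota 0 l]).
Proof.
move: k; apply: double_star_vertex_ind.
all: try (move=> i il; split); rewrite /tedge inE mem_arm ?oddD2 /=; lia.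
Qed.

Lemma nbrs_centre1 k : (k < n)%N ->
  adj k 1%N = (k \in 0%N :: [seq (2 + 2 * l + 2 * i)%N | i <- iota 0 m]).
Proof.
move: k; apply: double_star_vertex_ind.
all: try (move=> i il; split); rewrite /tedge inE mem_arm ?oddD2 /=; lia.
Qed.

Lemma nbrs_middle0 p : (p < l)%N -> forall k, (k < n)%N ->
  adj k (2 + 2 * p)%N = (k \in [:: 0; 3 + 2 * p])%N.
Proof.
move=> pl; apply: double_star_vertex_ind.
all: try (move=> i il; split); rewrite /tedge !inE ?oddD2 /=; lia.
Qed.

Lemma nbrs_pendant0 p : (p < l)%N -> forall k, (k < n)%N ->
  adj k (3 + 2 * p)%N = (k \in [:: 2 + 2 * p])%N.
Proof.
move=> pl; apply: double_star_vertex_ind.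
all: try (move=> i il; split); rewrite /tedge !inE ?oddD2 /=; lia.
Qed.

Lemma nbrs_middle1 p : (p < m)%N -> forall k, (k < n)%N ->
  adj k (2 + 2 * l + 2 * p)%N = (k \in [:: 1; 3 + 2 * l + 2 * p])%N.
Proof.
move=> pm; apply: double_star_vertex_ind.
all: try (move=> i il; split); rewrite /tedge !inE ?oddD2 /=; lia.
Qed.

Lemma nbrs_pendant1 p : (p < m)%N -> forall k, (k < n)%N ->
  adj k (3 + 2 * l + 2 * p)%N = (k \in [:: 2 + 2 * l + 2 * p])%N.
Proof.
move=> pm; apply: double_star_vertex_ind.
all: try (move=> i il; split); rewrite /tedge !inE ?oddD2 /=; lia.
Qed.

End DoubleStarVertices.

Lemma pendant_path_eigen (R : comPzRingType) (a c x y : R) :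
  a * y = x -> a * x = c + y -> (a ^+ 2 - 1) * y = c /\ (a ^+ 2 - 1) * x = a * c.
Proof.
move=> Ey Ex; have Ty : (a ^+ 2 - 1) * y = c by rewrite mulrBl mul1r -mulrA Ey Ex addrK.
by split; rewrite // -Ey mulrCA Ty.
Qed.

Lemma qT_algC (l m : nat) : pQtoC (qT l m) =
  'X^6 - (l + m + 3)%:R *: 'X^4 + (l * m + l + m + 3)%:R *: 'X^2 - 1.
Proof.
by rewrite /qT rmorphB rmorphD rmorphB /= !map_polyZ !map_polyXn rmorph1 !rmorph_nat.
Qed.

Lemma horner_qT (l m : nat) (a : algC) : (pQtoC (qT l m)).[a] =
  a ^+ 2 * (a ^+ 2 - 1 - l%:R) * (a ^+ 2 - 1 - m%:R) - (a ^+ 2 - 1) ^+ 2.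
Proof.
rewrite qT_algC !(hornerD, hornerN, hornerZ, hornerXn) -polyC1 hornerC.
by rewrite !natrD !natrM; ring.
Qed.

Lemma root_qTN (l m : nat) (a : algC) :
  root (pQtoC (qT l m)) (- a) = root (pQtoC (qT l m)) a.
Proof. by rewrite /root !horner_qT sqrrN. Qed.

Lemma centres_vanish (l m : nat) (a u0 u1 P Q : algC) :
  ~~ root (pQtoC (qT l m)) a ->
  a * u0 = u1 + P -> a * u1 = u0 + Q ->
  (a ^+ 2 - 1) * P = l%:R * (a * u0) -> (a ^+ 2 - 1) * Q = m%:R * (a * u1) ->
  u0 = 0 /\ u1 = 0.
Proof.
rewrite /root horner_qT; set t := a ^+ 2 - 1; move=> qa E0 E1 EP EQ.
have X : a * (t - l%:R) * u0 = t * u1.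
  apply/eqP; rewrite -subr_eq0.
  have -> : a * (t - l%:R) * u0 - t * u1 = t * (a * u0 - (u1 + P)) + (t * P - l%:R * (a * u0)).
    by ring.
  by rewrite EP E0 !subrr mulr0 addr0.
have Y : a * (t - m%:R) * u1 = t * u0.
  apply/eqP; rewrite -subr_eq0.
  have -> : a * (t - m%:R) * u1 - t * u0 = t * (a * u1 - (u0 + Q)) + (t * Q - m%:R * (a * u1)).
    by ring.
  by rewrite EQ E1 !subrr mulr0 addr0.
(* X and Y form a linear system in u0, u1 whose determinant is q(a). *)
split; apply: (mulfI qa); rewrite mulr0.
  have -> : (a ^+ 2 * (t - l%:R) * (t - m%:R) - t ^+ 2) * u0 =
      a * (t - m%:R) * (a * (t - l%:R) * u0) - t * (t * u0) by ring.
  by rewrite X -Y; ring.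
have -> : (a ^+ 2 * (t - l%:R) * (t - m%:R) - t ^+ 2) * u1 =
    a * (t - l%:R) * (a * (t - m%:R) * u1) - t * (t * u1) by ring.
by rewrite Y -X; ring.
Qed.

Section EigenvectorEquations.

Variables (l m : nat) (a : algC) (w : nat -> algC).
Local Notation n := (2 + 2 * l + 2 * m)%N.
Hypothesis eigen_w : forall j, (j < n)%N ->
  a * w j = \sum_(k < n) w k * (tedge l m k j || tedge l m j k)%:R.

Lemma eigen_nbrs j N :
  (forall k, (k < n)%N -> (tedge l m k j || tedge l m j k) = (k \in N)) ->
  (j < n)%N -> uniq N -> {in N, forall k, (k < n)%N} ->
  a * w j = \sum_(k <- N) w k.
Proof. by move=> eN jn uN Nn; rewrite eigen_w // (sum_nbrs _ uN Nn eN). Qed.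

Lemma eigen_centre0 : a * w 0 = w 1 + \sum_(i < l) w (2 + 2 * i)%N.
Proof.
rewrite (eigen_nbrs (@nbrs_centre0 l m)) ?big_cons ?sum_arm //=.
  by rewrite mem_arm uniq_arm andbT.
by move=> k; rewrite inE mem_arm => /orP[/eqP->|/andP[/andP[_ kl] _]]; lia.
Qed.

Lemma eigen_centre1 : a * w 1 = w 0 + \sum_(i < m) w (2 + 2 * l + 2 * i)%N.
Proof.
rewrite (eigen_nbrs (@nbrs_centre1 l m)) ?big_cons ?sum_arm //=.
  by rewrite mem_arm uniq_arm andbT.
by move=> k; rewrite inE mem_arm => /orP[/eqP->|/andP[/andP[_ kl] _]]; lia.
Qed.

Lemma eigen_middle0 p : (p < l)%N -> a * w (2 + 2 * p)%N = w 0 + w (3 + 2 * p)%N.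
Proof.
move=> pl; rewrite (eigen_nbrs (nbrs_middle0 pl)) ?big_cons ?big_nil ?addr0 //=; first lia.
by move=> k; rewrite !inE => /orP[]/eqP->; lia.
Qed.

Lemma eigen_pendant0 p : (p < l)%N -> a * w (3 + 2 * p)%N = w (2 + 2 * p)%N.
Proof.
move=> pl; rewrite (eigen_nbrs (nbrs_pendant0 pl)) ?big_cons ?big_nil ?addr0 //=; first lia.
by move=> k; rewrite !inE => /eqP->; lia.
Qed.

Lemma eigen_middle1 p : (p < m)%N ->
  a * w (2 + 2 * l + 2 * p)%N = w 1 + w (3 + 2 * l + 2 * p)%N.
Proof.
move=> pm; rewrite (eigen_nbrs (nbrs_middle1 pm)) ?big_cons ?big_nil ?addr0 //=; first lia.
by move=> k; rewrite !inE => /orP[]/eqP->; lia.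
Qed.

Lemma eigen_pendant1 p : (p < m)%N ->
  a * w (3 + 2 * l + 2 * p)%N = w (2 + 2 * l + 2 * p)%N.
Proof.
move=> pm; rewrite (eigen_nbrs (nbrs_pendant1 pm)) ?big_cons ?big_nil ?addr0 //=; first lia.
by move=> k; rewrite !inE => /eqP->; lia.
Qed.

Lemma eigenvector_vanish :
  a ^+ 2 != 1 -> ~~ root (pQtoC (qT l m)) a -> forall j, (j < n)%N -> w j = 0.
Proof.
move=> a2 qa; have t_neq0 : a ^+ 2 - 1 != 0 by rewrite subr_eq0.
have arm0 p (pl : (p < l)%N) := pendant_path_eigen (eigen_pendant0 pl) (eigen_middle0 pl).
have arm1 p (pm : (p < m)%N) := pendant_path_eigen (eigen_pendant1 pm) (eigen_middle1 pm).
have [w0 w1] : w 0 = 0 /\ w 1 = 0.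
  apply: (centres_vanish qa eigen_centre0 eigen_centre1).
    rewrite mulr_sumr (eq_bigr (fun=> a * w 0)) ?sumr_const ?card_ord ?mulr_natl //.
    by move=> i _; rewrite (arm0 _ (ltn_ord i)).2.
  rewrite mulr_sumr (eq_bigr (fun=> a * w 1)) ?sumr_const ?card_ord ?mulr_natl //.
  by move=> i _; rewrite (arm1 _ (ltn_ord i)).2.
apply: double_star_vertex_ind => // i ilm; split; apply: (mulfI t_neq0); rewrite mulr0.
- by rewrite (arm0 _ ilm).2 w0 mulr0.
- by rewrite (arm0 _ ilm).1 w0.
- by rewrite (arm1 _ ilm).2 w1 mulr0.
- by rewrite (arm1 _ ilm).1 w1.
Qed.

End EigenvectorEquations.

Lemma adjT_eigenvalue (l m : nat) (a : algC) :
  eigenvalue (adjT l m) a -> a ^+ 2 = 1 \/ root (pQtoC (qT l m)) a.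
Proof.
case/eigenvalueP => v Ev v_neq0.
pose w k := if insub k is Some i then v 0 i else 0.
have wE (i : 'I_(2 + 2 * l + 2 * m)) : w i = v 0 i by rewrite /w valK.
have eigen_w j : (j < 2 + 2 * l + 2 * m)%N ->
    a * w j = \sum_(k < 2 + 2 * l + 2 * m) w k * (tedge l m k j || tedge l m j k)%:R.
  move=> jn; rewrite -[j]/(nat_of_ord (Ordinal jn)) wE.
  have := congr1 (fun u : 'rV_(2 + 2 * l + 2 * m) => u 0 (Ordinal jn)) Ev.
  by rewrite !mxE => <-; apply: eq_bigr => k _; rewrite wE mxE.
have [a2|a2] := eqVneq (a ^+ 2) 1; [by left | right].
apply: contraNT v_neq0 => qa; apply/eqP/rowP => j.
by rewrite mxE -wE (eigenvector_vanish eigen_w a2 qa (ltn_ord j)).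
Qed.

(** * Roots of q and their conjugates *)

Lemma even_sextic_factor (a b : algC) :
  exists b1 b2 b3 : algC,
    'X^6 - a *: 'X^4 + b *: 'X^2 - 1 =
      \prod_(w <- [:: b1; -b1; b2; -b2; b3; -b3]) ('X - w%:P)
    /\ (b1 * b2 * b3) ^+ 2 = 1.
Proof.
pose p : {poly algC} := Poly [:: -1; b; -a; 1].
have size_p : size p = 4%N by rewrite (@PolyK _ 0) //= oner_neq0.
have [rs Dp] := closed_field_poly_normal p.
rewrite lead_coefE size_p coef_Poly scale1r in Dp.
have /eqP := size_prod_XsubC rs id; rewrite -Dp size_p.
case: rs Dp => [|y1 [|y2 [|y3 []]]] // Dp _.
have y123 : y1 * y2 * y3 = 1.
  have := congr1 (horner^~ 0) Dp.
  rewrite horner_prod !big_cons big_nil /= !hornerE /= => p0.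
  by apply: oppr_inj; rewrite p0; ring.
exists (sqrtC y1), (sqrtC y2), (sqrtC y3); split; last by rewrite !exprMn !sqrtCK.
have -> : 'X^6 - a *: 'X^4 + b *: 'X^2 - 1 = p \Po 'X^2.
  rewrite /p /= !cons_poly_def !comp_poly_MXaddC.
  by rewrite -!mul_polyC; ring.
rewrite Dp rmorph_prod !big_cons big_nil /= !comp_polyB !comp_polyX !comp_polyC.
rewrite -{1}(sqrtCK y1) -{1}(sqrtCK y2) -{1}(sqrtCK y3) !polyCN !polyC_exp big_nil; ring.
Qed.

Lemma irredp_separable (F : numFieldType) (q : {poly F}) :
  irreducible_poly q -> separable_poly q.
Proof.
move=> irr_q; have q_neq0 := irredp_neq0 irr_q.
have dq_neq0 : q^`() != 0.
  apply: contraTneq irr_q.1 => dq0.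
  have /eqP := congr1 (fun p : {poly F} => p`_(size q).-2) dq0.
  rewrite coef_deriv coef0; case Dsq: (size q) => [|[|n]] //=.
  rewrite mulrn_eq0 /= -[n.+1]/(n.+2).-1 -Dsq -lead_coefE.
  by rewrite lead_coef_eq0 (negbTE q_neq0).
rewrite unlock /coprimep; apply: contraT => /irr_q/(_ (dvdp_gcdl q q^`())).
move=> gcd_q; have := dvdp_gcdr q q^`(); rewrite (eqp_dvdl _ gcd_q).
by move=> /(dvdp_leq dq_neq0); rewrite leqNgt lt_size_deriv.
Qed.

Lemma irredp_root_notin_Crat (q : {poly rat}) (x : algC) :
  irreducible_poly q -> (2 < size q)%N -> root (pQtoC q) x -> x \notin Crat.
Proof.
move=> irr_q q_gt2 qx; apply/negP => /CratP[r Dx].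
move: qx; rewrite Dx fmorph_root root_factor_theorem => /irr_q.
by rewrite size_XsubC => /(_ isT)/eqp_size; rewrite size_XsubC => q2; rewrite -q2 in q_gt2.
Qed.

Lemma aut_root (nu : {rmorphism algC -> algC}) (q : {poly rat}) (x : algC) :
  root (pQtoC q) x -> root (pQtoC q) (nu x).
Proof. by rewrite -(fmorph_root nu) -map_poly_comp (eq_map_poly (fmorph_rat nu)). Qed.

Definition splitting_field_of (L : fieldExtType rat) of splitting_field_axiom L : Type := L.
HB.instance Definition _ (L : fieldExtType rat) (ax : splitting_field_axiom L) :=
  FieldExt.on (splitting_field_of ax).
HB.instance Definition _ (L : fieldExtType rat) (ax : splitting_field_axiom L) :=
  FieldExt_isSplittingField.Build rat (splitting_field_of ax) ax.

(* The splitting field of minCpoly x, realised as a number field, has a Galois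
   automorphism mapping x to y, which extends to all of algC. *)
Lemma minCpoly_aut_conj (x y : algC) :
  root (minCpoly x) y -> exists nu : {rmorphism algC -> algC}, nu x = y.
Proof.
have [p0 [Dp0 _] min_p0] := minCpolyP x.
have [r Dr] := closed_field_poly_normal (minCpoly x).
rewrite (monicP (minCpoly_monic x)) scale1r in Dr.
have [Qs [QsC [rs Drs genQs]]] := num_field_exists r.
have QsC_poly (p : {poly rat}) : map_poly QsC (map_poly (in_alg Qs) p) = pQtoC p.
  by rewrite -map_poly_comp; apply: eq_map_poly => c /=; rewrite alg_num_field fmorph_rat.
have Dp : map_poly (in_alg Qs) p0 = \prod_(z <- rs) ('X - z%:P).
  apply: (map_poly_inj QsC); rewrite QsC_poly -Dp0 Dr -Drs big_map rmorph_prod.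
  by apply: eq_bigr => z _; rewrite /= map_polyXsubC.
have ax : splitting_field_axiom Qs.
  exists (map_poly (in_alg Qs) p0); first by apply/polyOver1P; exists p0.
  by exists rs; rewrite ?Dp ?eqpxx.
pose L := splitting_field_of ax.
have in_r z : root (minCpoly x) z -> exists2 z' : L, z' \in rs & QsC z' = z.
  by rewrite Dr root_prod_XsubC -Drs => /mapP[z' ? ->]; exists z'.
move=> yx; have [x' _ Dx] := in_r x (root_minCpoly x); have [y' y'_rs Dy] := in_r y yx.
have [m0 Dm0] := polyOver1P (minPolyOver 1 x').
have p0_dvd_m0 : p0 %| m0.
  rewrite -min_p0 -QsC_poly -Dm0 -Dx fmorph_root; exact: root_minPoly.
have y'_root : root (minPoly 1 x') y'.
  rewrite Dm0; apply: root_dvdp (_ : map_poly (in_alg Qs) p0 %| _) _.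
    by rewrite dvdp_map.
  by rewrite Dp root_prod_XsubC.
have [g _ gx'] := normalField_root_minPoly (sub1v _) (normalFieldf 1) (memvf x') y'_root.
have [nu QsC_g] := extend_algC_subfield_aut QsC g.
by exists nu; rewrite -Dx -Dy -QsC_g; congr (QsC _).
Qed.

Lemma irredp_aut_conj (q : {poly rat}) (x y : algC) :
  irreducible_poly q -> root (pQtoC q) x -> root (pQtoC q) y ->
  exists nu : {rmorphism algC -> algC}, nu x = y.
Proof.
move=> irr_q qx qy; apply: minCpoly_aut_conj.
have [p0 [Dp0 _] min_p0] := minCpolyP x.
have p0_q : p0 %= q.
  apply: irr_q; last by rewrite -min_p0.
  by rewrite -(size_map_poly (ratr : rat -> algC)) -Dp0 neq_ltn size_minCpoly orbT.
by rewrite Dp0 (eqp_root (_ : _ %= pQtoC q)) ?eqp_map.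
Qed.

(** * Linear independence of the roots *)

Lemma aut_fixed_coef_eq0 (nu : {rmorphism algC -> algC}) (x w : algC) (c0 c : rat) :
  nu x = x -> nu w = - w -> x \notin Crat -> ratr c0 + ratr c * x + w = 0 -> c = 0.
Proof.
move=> nux nuw x_irr E.
have E' : ratr c0 + ratr c * x - w = 0.
  by have := congr1 nu E; rewrite !rmorphD fmorph_rat rmorphM fmorph_rat nux nuw rmorph0.
have : (ratr c0 + ratr c * x) *+ 2 = (ratr c0 + ratr c * x + w) + (ratr c0 + ratr c * x - w).
  by rewrite mulr2n; ring.
rewrite E E' addr0 => /eqP; rewrite mulrn_eq0 /= => /eqP Ex.
apply: contraNeq x_irr => c_neq0; apply/CratP; exists (- c0 / c).
have rc_neq0 : ratr c != 0 :> algC by rewrite fmorph_eq0.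
rewrite fmorph_div rmorphN; apply: (mulfI rc_neq0); rewrite mulrCA divff // mulr1.
by apply/eqP; rewrite -addr_eq0 addrC Ex.
Qed.

Section SignedRootPairs.

Variables (q : {poly rat}) (b1 b2 b3 : algC).
Let R := [:: b1; -b1; b2; -b2; b3; -b3].
Hypothesis irr_q : irreducible_poly q.
Hypothesis Dq : pQtoC q = \prod_(w <- R) ('X - w%:P).
Hypothesis b123 : (b1 * b2 * b3) ^+ 2 = 1.

Lemma root_pairs x : root (pQtoC q) x = (x \in R).
Proof. by rewrite Dq root_prod_XsubC. Qed.

Lemma pairs_notin_Crat x : x \in R -> x \notin Crat.
Proof.
rewrite -root_pairs; apply: irredp_root_notin_Crat => //.
by rewrite -(size_map_poly (ratr : rat -> algC)) Dq size_prod_XsubC.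
Qed.

Lemma uniq_pair_squares : uniq [seq b ^+ 2 | b <- [:: b1; b2; b3]].
Proof.
have : uniq R by rewrite -separable_prod_XsubC -Dq separable_map irredp_separable.
rewrite /= !inE !eqf_sqr !negb_or -!andbA.
by case/and5P => _ -> -> -> /and5P[-> _ _ _ /and5P[_ _ -> -> _]].
Qed.

Lemma mem_pairs x : x \in R -> exists2 b, b \in [:: b1; b2; b3] & x = b \/ x = - b.
Proof.
rewrite !inE => /orP[|/orP[|/orP[|/orP[|/orP[]]]]] /eqP->;
  [exists b1 | exists b1 | exists b2 | exists b2 | exists b3 | exists b3];
  rewrite ?inE ?eqxx ?orbT //; by [left | right].
Qed.

Lemma aut_pairs (nu : {rmorphism algC -> algC}) x : x \in R -> nu x \in R.
Proof. by rewrite -!root_pairs; apply: aut_root. Qed.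

Lemma pairs_aut_conj x y :
  x \in R -> y \in R -> exists nu : {rmorphism algC -> algC}, nu x = y.
Proof. by rewrite -!root_pairs; apply: irredp_aut_conj. Qed.

Definition flips_all_but (nu : {rmorphism algC -> algC}) x :=
  nu x = x /\ {in R, forall y, y ^+ 2 != x ^+ 2 -> nu y = - y}.

Lemma flips_all_but_conj nu x y :
  x \in R -> y \in R -> flips_all_but nu x ->
  exists nu' : {rmorphism algC -> algC}, flips_all_but nu' y.
Proof.
move=> xR yR [nux flip_nu]; have [s sy] := pairs_aut_conj yR xR.
exists (algC_invaut s \o nu \o s); split=> [|z zR zy] /=.
  by rewrite sy nux -[in LHS]sy algC_autK.
rewrite flip_nu ?aut_pairs //; first by rewrite rmorphN; congr (- _); apply: algC_autK.
by rewrite -sy -!rmorphXn (inj_eq (fmorph_inj s)).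
Qed.

Lemma flips_all_butP (nu : {rmorphism algC -> algC}) (x : algC) :
  nu x = x -> {in [:: b1; b2; b3], forall b, b ^+ 2 != x ^+ 2 -> nu b = - b} ->
  flips_all_but nu x.
Proof.
move=> nux flip_nu; split=> // _ /mem_pairs[b bR [] ->];
  by rewrite ?sqrrN ?rmorphN => bx; rewrite flip_nu.
Qed.

(* Take t with t b1 = - b1; as t fixes b1 b2 b3 = +-1, either t fixes one of
   b2, b3 and negates the other, or t swaps them up to sign and t \o t fixes b1
   and negates b2 and b3. *)
Lemma some_flips_all_but : exists nu x, x \in R /\ flips_all_but nu x.
Proof.
have := uniq_pair_squares; rewrite /= !inE negb_or andbT.
move=> /andP[/andP[b1_2 b1_3] b2_3].
have : (b1 * b2 * b3) ^+ 2 != 0 by rewrite b123 oner_neq0.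
rewrite expf_eq0 /= !mulf_eq0 !negb_or => /andP[/andP[b1_0 b2_0] b3_0].
have [t tb1] : exists t : {rmorphism algC -> algC}, t b1 = - b1.
  by apply: pairs_aut_conj; rewrite !inE eqxx ?orbT.
have t_prod : t (b1 * b2 * b3) = b1 * b2 * b3.
  by move/eqP: b123; rewrite sqrf_eq1 => /orP[]/eqP->; rewrite ?rmorphN rmorph1.
have t23 : t b2 * t b3 = - (b2 * b3).
  by apply: (mulfI b1_0); rewrite mulrN !mulrA -t_prod !rmorphM tb1 !mulNr opprK.
have : t b2 \in R by apply: aut_pairs; rewrite !inE eqxx ?orbT.
rewrite !inE => /orP[|/orP[|/orP[|/orP[|/orP[]]]]] /eqP tb2.
- have : t b2 = t (- b1) by rewrite tb2 rmorphN tb1 opprK.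
  by move/fmorph_inj => Db2; rewrite Db2 sqrrN eqxx in b1_2.
- have : t b2 = t b1 by rewrite tb2 tb1.
  by move/fmorph_inj => Db2; rewrite Db2 eqxx in b1_2.
- have tb3 : t b3 = - b3 by apply: (mulfI b2_0); rewrite -{1}tb2 t23 mulrN.
  exists t, b2; split; first by rewrite !inE eqxx ?orbT.
  apply: flips_all_butP => // b; rewrite !inE => /or3P[]/eqP->; rewrite ?eqxx //.
- have tb3 : t b3 = b3.
    by apply: (mulfI b2_0); apply: oppr_inj; rewrite -mulNr -tb2 t23.
  exists t, b3; split; first by rewrite !inE eqxx ?orbT.
  apply: flips_all_butP => // b; rewrite !inE => /or3P[]/eqP->; rewrite ?eqxx //.
- have tb3 : t b3 = - b2 by apply: (mulfI b3_0); rewrite -{1}tb2 t23 mulrN mulrC.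
  exists (t \o t), b1; split; first by rewrite !inE eqxx ?orbT.
  apply: flips_all_butP => /=; first by rewrite tb1 rmorphN tb1 opprK.
  move=> b; rewrite !inE => /or3P[]/eqP->; rewrite ?eqxx //= => _.
    by rewrite tb2 tb3.
  by rewrite tb3 rmorphN tb2.
- have tb3 : t b3 = b2.
    by apply: (mulfI b3_0); apply: oppr_inj; rewrite -mulNr -tb2 t23 mulrC.
  exists (t \o t), b1; split; first by rewrite !inE eqxx ?orbT.
  apply: flips_all_butP => /=; first by rewrite tb1 rmorphN tb1 opprK.
  move=> b; rewrite !inE => /or3P[]/eqP->; rewrite ?eqxx //= => _.
    by rewrite tb2 rmorphN tb3.
  by rewrite tb3 tb2.
Qed.

Lemma flips_all_but_exists x : x \in R -> exists nu, flips_all_but nu x.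
Proof.
move=> xR; have [nu [x0 [x0R flip_nu]]] := some_flips_all_but.
exact: flips_all_but_conj x0R xR flip_nu.
Qed.

Lemma pairs_Qlin_indep : Qlin_indep (mem [:: 1; b1; b2; b3]).
Proof.
have bR : {subset [:: b1; b2; b3] <= R}.
  by move=> x; rewrite !inE => /or3P[]/eqP->; rewrite eqxx ?orbT.
apply: Qlin_indep_seq.
  rewrite cons_uniq (map_uniq uniq_pair_squares) andbT.
  by apply: contraL (rpred1 Crat) => /bR/pairs_notin_Crat.
move=> c; rewrite !big_cons big_nil mulr1 addr0 => E.
have fixed_coef x y z :
    x \in R -> y \in R -> z \in R -> y ^+ 2 != x ^+ 2 -> z ^+ 2 != x ^+ 2 ->
    ratr (c 1) + ratr (c x) * x + (ratr (c y) * y + ratr (c z) * z) = 0 -> c x = 0.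
  move=> xR yR zR yx zx; have [nu [nux flip_nu]] := flips_all_but_exists xR.
  apply: aut_fixed_coef_eq0 nux _ (pairs_notin_Crat xR).
  rewrite rmorphD [nu (_ * y)]rmorphM [nu (_ * z)]rmorphM !fmorph_rat.
  by rewrite !flip_nu // opprD !mulrN.
have := uniq_pair_squares; rewrite /= !inE negb_or andbT.
move=> /andP[/andP[b12 b13] b23].
have [b1R b2R b3R] : [/\ b1 \in R, b2 \in R & b3 \in R] by rewrite !inE !eqxx ?orbT.
have c1 : c b1 = 0.
  apply: (fixed_coef _ _ _ b1R b2R b3R); rewrite 1?eq_sym //.
  by rewrite -[RHS]E; ring.
have c2 : c b2 = 0.
  apply: (fixed_coef _ _ _ b2R b1R b3R b12); first by rewrite eq_sym.
  by rewrite -[RHS]E; ring.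
have c3 : c b3 = 0.
  by apply: (fixed_coef _ _ _ b3R b1R b2R b13 b23); rewrite -[RHS]E; ring.
have c0 : c 1 = 0.
  by move/eqP: E; rewrite c1 c2 c3 rmorph0 !mul0r !addr0 fmorph_eq0 => /eqP.
by move=> x; rewrite !inE => /or4P[]/eqP->.
Qed.
End SignedRootPairs.

Lemma positive_pairs_Qlin_indep (q : {poly rat}) (b1 b2 b3 : algC) :
  irreducible_poly q ->
  pQtoC q = \prod_(w <- [:: b1; -b1; b2; -b2; b3; -b3]) ('X - w%:P) ->
  (b1 * b2 * b3) ^+ 2 = 1 ->
  Qlin_indep [pred x | (0 < x) && ((x ^+ 2 == 1) || root (pQtoC q) x)].
Proof.
move=> irr_q Dq b123; pose pos b : algC := if 0 < - b then - b else b.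
have pos_sign b : pos b = b \/ pos b = - b by rewrite /pos; case: ifP; [right | left].
have pos_pair b : perm_eq [:: b; - b] [:: pos b; - pos b].
  by case: (pos_sign b) => ->; rewrite ?opprK // (perm_catC [:: b]).
have Dq' : pQtoC q = \prod_(w <- [:: pos b1; - pos b1; pos b2; - pos b2; pos b3; - pos b3])
    ('X - w%:P).
  by rewrite Dq (perm_big _ (perm_cat (pos_pair b1) (perm_cat (pos_pair b2) (pos_pair b3)))).
have b123' : (pos b1 * pos b2 * pos b3) ^+ 2 = 1.
  have pos_sqr b : pos b ^+ 2 = b ^+ 2 by case: (pos_sign b) => ->; rewrite ?sqrrN.
  by rewrite !exprMn !pos_sqr -!exprMn.
apply: Qlin_indepS (pairs_Qlin_indep irr_q Dq' b123') => x /andP[x_gt0].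
case/orP => [|/[!(root_pairs Dq)] /mem_pairs[b bR Dx]].
  rewrite sqrf_eq1 => /orP[/eqP-> | /eqP x_1]; first by rewrite inE eqxx.
  by rewrite x_1 oppr_gt0 ltr10 in x_gt0.
have -> : x = pos b.
  rewrite /pos; case: ifP => b_neg; case: Dx => Dx //.
    by move: b_neg; rewrite -Dx oppr_gt0 => /(lt_trans x_gt0); rewrite ltxx.
  by rewrite -Dx x_gt0 in b_neg.
by rewrite inE (map_f pos bR) orbT.
Qed.

Theorem corollary2p6 (l m : nat) :
  irreducible_poly (qT l m) ->
  Qlin_indep [pred a : algC | (0 < a) && eigenvalue (adjT l m) a] /\
  Qlin_indep [pred a : algC | (a < 0) && eigenvalue (adjT l m) a].
Proof.
move=> irr_q.
have [b1 [b2 [b3 []]]] := even_sextic_factor (l + m + 3)%:R (l * m + l + m + 3)%:R.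
rewrite -qT_algC => Dq b123; have indep := positive_pairs_Qlin_indep irr_q Dq b123.
split.
  apply: Qlin_indepS indep => a /andP[a_gt0 /adjT_eigenvalue a_eig].
  by rewrite inE a_gt0; case: a_eig => [->|->]; rewrite ?eqxx ?orbT.
apply: Qlin_indepS (Qlin_indepN indep) => a /andP[a_lt0 /adjT_eigenvalue a_eig].
rewrite !inE oppr_gt0 a_lt0 sqrrN root_qTN.
by case: a_eig => [->|->]; rewrite ?eqxx ?orbT.
Qed.
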